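(* In the setting described in the context, suppose that the matrix $J$ satisfies $\sup_{|i-j|\le R}|J_{i,j}|<\infty$ for every $R\ge0$. Then for every $\ell\ge0$, \[ \lim_{n\to\infty}\Big|\int_{\mathbb{R}}x^\ell\,d\nu_n(x)-\int_{\mathbb{R}}x^\ell\,d\eta_n(x)\Big|=0, \] and consequently $\lim_{n\to\infty}\big|\int f\,d\nu_n-\int f\,d\eta_n\big|=0$ for every polynomial $f\in\mathbb{R}[x]$.
   Context: Let $r\ge1$ and let $\mu_1,\dots,\mu_r$ be positive Borel measures on $\mathbb{R}$ with all moments finite, forming a perfect system: for every $\vec n\in\mathbb{N}_0^r$ there is a monic polynomial $P_{\vec n}$ of degree $|\vec n|=n_1+\dots+n_r$ with $\int x^kP_{\vec n}\,d\mu_j=0$ for $0\le k\le n_j-1$, $1\le j\le r$. Type I polynomials $A_{\vec n}=(A_{\vec n,1},\dots,A_{\vec n,r})$: $\deg A_{\vec n,j}\le n_j-1$, $\sum_j\int x^kA_{\vec n,j}\,d\mu_j=0$ for $0\le k\le|\vec n|-2$, and $=1$ for $k=|\vec n|-1$. Let $\mu$ be a positive measure with $\mu_j\ll\mu$, $w_j=d\mu_j/d\mu$, $Q_{\vec n}=\sum_jA_{\vec n,j}w_j$. Fix a path $(\vec n_\ell)_{\ell\ge0}$ with $|\vec n_\ell|=\ell$, $\vec n_{\ell+1}=\vec n_\ell+\vec e_{i_\ell}$ ($\vec e_j$ the $j$-th unit vector), and set $p_\ell=P_{\vec n_\ell}$, $q_\ell=Q_{\vec n_{\ell+1}}$, so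 that $\int p_\ell q_{\ell'}\,d\mu=\delta_{\ell,\ell'}$. The Christoffel--Darboux kernel is $K_n(x,y)=\sum_{j=0}^{n-1}p_j(x)q_j(y)$. Define $\nu_n=\frac1n\sum_{y:\,p_n(y)=0}\delta_y$ (zeros counted with multiplicity) and the signed measure $d\eta_n(x)=\frac1nK_n(x,x)\,d\mu(x)$. The matrix $J=[J_{\ell,k}]_{\ell,k\ge0}$ is defined by $xp_\ell=\sum_{k=0}^{\ell+1}J_{\ell,k}p_k$, $J_{\ell,k}=0$ for $k>\ell+1$. *)

From HB Require Import structures.
From mathcomp Require Import all_boot all_order all_algebra.
From mathcomp Require Import all_classical all_reals all_analysis.
From mathcomp Require Import complex.

Set Implicit Arguments.
Unset Strict Implicit.
Unset Printing Implicit Defensive.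

Import Order.TTheory GRing.Theory Num.Theory.
Import numFieldNormedType.Exports.
Local Open Scope classical_set_scope.
Local Open Scope ring_scope.

Definition mi_size (r : nat) (n : 'I_r -> nat) : nat := \sum_(j < r) n j.

(* The step-line path: i : nat -> 'I_r gives n_0 = 0, n_{l+1} = n_l + e_{i l}.
   Thus (n_l)_j = #{k < l | i k = j}. *)
Definition path_mi (r : nat) (i : nat -> 'I_r) (l : nat) : 'I_r -> nat :=
  fun j => \sum_(k < l) (i k == j : nat).

Definition typeII (R : realType) (r : nat) (mu : 'I_r -> {measure set R -> \bar R})
    (n : 'I_r -> nat) (P : {poly R}) : Prop :=
  P \is monic /\ size P = (mi_size n).+1 /\
  forall (j : 'I_r) (k : nat), (k < n j)%N ->
    Rintegral (mu j) setT (fun x => x ^+ k * P.[x]) = 0.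

Definition perfect (R : realType) (r : nat) (mu : 'I_r -> {measure set R -> \bar R}) : Prop :=
  forall n : 'I_r -> nat, exists! P : {poly R}, typeII mu n P.

(* Type I: deg A_j <= n_j - 1 (i.e. size A_j <= n_j), and
   sum_j int x^k A_j dmu_j = 0 for 0 <= k <= |n| - 2, = 1 for k = |n| - 1. *)
Definition typeI (R : realType) (r : nat) (mu : 'I_r -> {measure set R -> \bar R})
    (n : 'I_r -> nat) (A : 'I_r -> {poly R}) : Prop :=
  (forall j, (size (A j) <= n j)%N) /\
  forall k : nat,
    ((k.+2 <= mi_size n)%N ->
       \sum_(j < r) Rintegral (mu j) setT (fun x => x ^+ k * (A j).[x]) = 0) /\
    (k.+1 = mi_size n ->
       \sum_(j < r) Rintegral (mu j) setT (fun x => x ^+ k * (A j).[x]) = 1).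

Definition is_density (R : realType) (nu mu : {measure set R -> \bar R})
    (w : R -> R) : Prop :=
  measurable_fun setT w /\ (forall x, 0 <= w x) /\
  forall A : set R, measurable A -> nu A = (\int[mu]_(x in A) (w x)%:E)%E.

Definition Qfun (R : realType) (r : nat) (A : 'I_r -> {poly R}) (w : 'I_r -> R -> R)
    (x : R) : R := \sum_(j < r) (A j).[x] * w j x.

(* The zeros (in C = R[i], with multiplicity) of a real polynomial. *)
Definition zeros (R : realType) (p : {poly R}) : seq R[i] :=
  projT1 (closed_field_poly_normal (map_poly (real_complex R) p)).

(* int x^l dnu_n = (1/n) sum_{zeros y of p_n} y^l *)
Definition nu_poly_integral (R : realType) (p : {poly R}) (n : nat) (f : {poly R}) : R[i] :=
  (n%:R)^-1 * \sum_(y <- zeros p) (map_poly (real_complex R) f).[y].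

Definition finite_moments (R : realType) (nu : {measure set R -> \bar R}) : Prop :=
  forall k : nat, nu.-integrable setT (fun x => (x ^+ k)%:E).

Definition pseq (R : realType) (r : nat) (P : ('I_r -> nat) -> {poly R})
    (i : nat -> 'I_r) (l : nat) : {poly R} := P (path_mi i l).

Definition qseq (R : realType) (r : nat) (A : ('I_r -> nat) -> 'I_r -> {poly R})
    (w : 'I_r -> R -> R) (i : nat -> 'I_r) (l : nat) (x : R) : R :=
  Qfun (A (path_mi i l.+1)) w x.

Definition CDkernel (R : realType) (r : nat) (P : ('I_r -> nat) -> {poly R})
    (A : ('I_r -> nat) -> 'I_r -> {poly R}) (w : 'I_r -> R -> R)
    (i : nat -> 'I_r) (n : nat) (x y : R) : R :=
  \sum_(j < n) (pseq P i j).[x] * qseq A w i j y.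

(* int f d eta_n, with d eta_n = (1/n) K_n(x,x) d mu(x) *)
Definition eta_poly_integral (R : realType) (r : nat) (P : ('I_r -> nat) -> {poly R})
    (A : ('I_r -> nat) -> 'I_r -> {poly R}) (w : 'I_r -> R -> R)
    (m : {measure set R -> \bar R}) (i : nat -> 'I_r) (n : nat) (f : {poly R}) : R :=
  (n%:R)^-1 * Rintegral m setT (fun x => f.[x] * CDkernel P A w i n x x).

(* Both sides are traces of powers of J.  Since x p_l = sum_k J_{l,k} p_k, the
   column (p_0, ..., p_{n-1}) is annihilated by x - J_n modulo p_n, so p_n is
   the characteristic polynomial of the truncation J_n = (J_{a,b})_{a,b<n} and
   int x^l dnu_n = tr (J_n^l) / n.  On the other side x^l p_j = sum_b (J^l)_{j,b} p_b,
   and the biorthogonality int p_b q_j dmu = delta_{b,j} turns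
   int x^l deta_n into sum_{j<n} (J^l)_{j,j} / n.  As J is lower Hessenberg,
   (J_n^l)_{j,j} = (J^l)_{j,j} unless j >= n - l, and the band bounds on J bound
   all these entries, so the two traces differ by O(1) and the moments by O(1/n). *)

From HB Require Import structures.
From mathcomp Require Import all_boot all_order all_algebra.
From mathcomp Require Import all_classical all_reals all_analysis.
From mathcomp Require Import complex zify measurable_realfun.

Set Implicit Arguments.
Unset Strict Implicit.
Unset Printing Implicit Defensive.

Import Order.TTheory GRing.Theory Num.Theory.
Import numFieldNormedType.Exports.
Local Open Scope classical_set_scope.
Local Open Scope ring_scope.

Section integral_density.
Context (R : realType) (nu m : {measure set R -> \bar R}) (w : R -> R).
Hypothesis nu_w : is_density nu m w.
Local Open Scope ereal_scope.
Import HBNNSimple.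

Let mw : measurable_fun setT w. Proof. by move: nu_w => []. Qed.
Let w_ge0 x : (0 <= w x)%R. Proof. by move: nu_w => [_ []]. Qed.
Let nuE A : measurable A -> nu A = \int[m]_(x in A) (w x)%:E.
Proof. by move: nu_w => [_ [_]]; apply. Qed.

Lemma nnsfun_integral_density (h : {nnsfun R >-> R}) :
  \int[m]_x ((h x)%:E * (w x)%:E) = \int[nu]_x (h x)%:E.
Proof.
pose A y := h @^-1` [set y].
have mA y : measurable (A y) by exact: measurable_funPTI.
have hE x : (h x)%:E = \sum_(y \in range h) (y * \1_(A y) x)%:E.
  by rewrite fsumEFin // -fimfunE.
have hy_ge0 y x : 0 <= (y * \1_(A y) x)%:E by exact: nnfun_muleindic_ge0.
have mhy y : measurable_fun setT (fun x : R => (y * \1_(A y) x)%:E).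
  by apply/measurable_EFinP; exact: measurable_funM.
have hwE x : (h x)%:E * (w x)%:E =
    \sum_(y \in range h) (y * \1_(A y) x)%:E * (w x)%:E.
  by rewrite hE ge0_mule_fsuml // => y; exact: hy_ge0.
under eq_integral do rewrite hwE.
under [RHS]eq_integral do rewrite hE.
rewrite !ge0_integral_fsum //; last 2 first.
- by move=> y; apply: emeasurable_funM => //; exact/measurable_EFinP.
- by move=> y x _; rewrite mule_ge0 ?hy_ge0 ?lee_fin.
apply: eq_fsbigr => y /[!inE] -[x _ <-] {y}.
under eq_integral do rewrite EFinM -muleA.
rewrite ge0_integralZl ?lee_fin //; last 2 first.
- by apply: emeasurable_funM => //; exact/measurable_EFinP.
- by move=> t _; rewrite mule_ge0 ?lee_fin.
rewrite integralZl_indic_nnsfun //; congr (_ * _).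
rewrite integral_indic // setIT nuE // [RHS]integral_mkcond epatch_indic.
by apply: eq_integral => t _; rewrite muleC.
Qed.

Lemma ge0_integral_density (f : R -> \bar R) : (forall x, 0 <= f x) ->
  measurable_fun setT f -> \int[m]_x (f x * (w x)%:E) = \int[nu]_x f x.
Proof.
move=> f0 mf; pose h := nnsfun_approx measurableT mf.
have hf x : EFin \o h^~ x @ \oo --> f x.
  by apply: cvg_nnsfun_approx => // t _; exact: f0.
have nd_h x : nondecreasing_seq (EFin \o h^~ x).
  by move=> a b ab; rewrite lee_fin; exact/lefP/nd_nnsfun_approx.
have fE x : f x = limn (EFin \o h^~ x) by apply/esym/cvg_lim.
have fwE x : f x * (w x)%:E = limn (fun n => (h n x)%:E * (w x)%:E).
  by apply/esym/cvg_lim => //; apply: cvgeZr; [|exact: hf].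
under eq_integral do rewrite fwE.
under [RHS]eq_integral do rewrite fE.
rewrite !monotone_convergence //.
- by under eq_fun do rewrite nnsfun_integral_density.
- by move=> n; apply/measurable_EFinP; exact: measurable_funPT.
- by move=> n x _; rewrite lee_fin.
- by move=> x _; exact: nd_h.
- by move=> n; apply: emeasurable_funM => //; apply/measurable_EFinP.
- by move=> n x _; rewrite mule_ge0 ?lee_fin.
- by move=> x _ a b ab; rewrite lee_wpmul2r ?lee_fin //; exact: nd_h.
Qed.

Lemma integral_density (f : R -> R) : measurable_fun setT f ->
  \int[m]_x (f x * w x)%:E = \int[nu]_x (f x)%:E.
Proof.
move=> mf; have mfE : measurable_fun setT (EFin \o f) by exact/measurable_EFinP.
rewrite integralE [RHS]integralE -!ge0_integral_density //; last 2 first.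
- exact: measurable_funeneg.
- exact: measurable_funepos.
congr (_ - _); apply: eq_integral => x _;
  by rewrite !(funerpos, funerneg) /= -EFinM maxr_pMl // ?mulNr mul0r.
Qed.

Lemma integrable_density (f : R -> R) : measurable_fun setT f ->
  nu.-integrable setT (EFin \o f) ->
  m.-integrable setT (EFin \o (fun x => f x * w x)%R).
Proof.
move=> mf /integrableP[_ fnu]; apply/integrableP; split.
  by apply/measurable_EFinP; exact: measurable_funM.
under eq_integral do rewrite /= normrM (ger0_norm (w_ge0 _)) EFinM.
by rewrite ge0_integral_density //; apply/measurable_EFinP; exact: measurableT_comp.
Qed.

Lemma Rintegral_density (f : R -> R) : measurable_fun setT f ->
  Rintegral m setT (fun x => f x * w x)%R = Rintegral nu setT f.
Proof. by move=> mf; rewrite /Rintegral integral_density. Qed.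

End integral_density.

Lemma measurable_horner (R : realType) (q : {poly R}) :
  measurable_fun setT (horner q).
Proof. exact: continuous_measurable_fun (continuous_horner (p := q)). Qed.

Section polynomial_integral.
Context (R : realType) (mu : {measure set R -> \bar R}).

Lemma integrable_Rsum (I : Type) (s : seq I) (F : I -> R -> R) :
  (forall i, mu.-integrable setT (EFin \o F i)) ->
  mu.-integrable setT (EFin \o (fun x => \sum_(i <- s) F i x)).
Proof.
move=> intF; rewrite (_ : _ \o _ = fun x => \sum_(i <- s) (F i x)%:E).
  by apply: integrable_sum => // i _; exact: intF.
by apply/funext => x; rewrite /= sumEFin.
Qed.

Lemma Rintegral_sum (I : Type) (s : seq I) (F : I -> R -> R) :
  (forall i, mu.-integrable setT (EFin \o F i)) ->
  Rintegral mu setT (fun x => \sum_(i <- s) F i x) =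
    \sum_(i <- s) Rintegral mu setT (F i).
Proof.
move=> intF; elim: s => [|a s IHs].
  by under eq_Rintegral do rewrite big_nil; rewrite Rintegral_cst // mul0r big_nil.
under eq_Rintegral do rewrite big_cons.
by rewrite RintegralD // ?IHs ?big_cons //; exact: integrable_Rsum.
Qed.

Hypothesis mu_moments : finite_moments mu.

Lemma integrable_horner (q : {poly R}) : mu.-integrable setT (EFin \o horner q).
Proof.
rewrite (_ : horner q = fun x => \sum_(s < size q) q`_s * x ^+ s).
  by apply: integrable_Rsum => s; exact: integrableZl (mu_moments s).
by apply/funext => x; rewrite horner_coef.
Qed.

Definition poly_integral (q : {poly R}) : R := Rintegral mu setT (horner q).

Lemma poly_integral_sum (I : Type) (s : seq I) (c : I -> R) (q : I -> {poly R}) :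
  poly_integral (\sum_(i <- s) c i *: q i) = \sum_(i <- s) c i * poly_integral (q i).
Proof.
rewrite /poly_integral (_ : horner _ = fun x => \sum_(i <- s) c i * (q i).[x]).
  rewrite Rintegral_sum => [|i]; last first.
    exact: integrableZl (integrable_horner _).
  by apply: eq_bigr => i _; rewrite RintegralZl //; exact: integrable_horner.
by apply/funext => x; rewrite horner_sum; under eq_bigr do rewrite hornerZ.
Qed.

Lemma poly_integral_mull (q g : {poly R}) :
  poly_integral (q * g) = \sum_(s < size q) q`_s * poly_integral ('X^s * g).
Proof.
rewrite -{1}[q]coefK poly_def mulr_suml -poly_integral_sum.
by under eq_bigr do rewrite -scalerAl.
Qed.

Lemma poly_integral_XnM s (g : {poly R}) :
  poly_integral ('X^s * g) = Rintegral mu setT (fun x => x ^+ s * g.[x]).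
Proof. by congr Rintegral; apply/funext => x; rewrite hornerM hornerXn. Qed.

End polynomial_integral.

Lemma sum_ord_narrow0 (V : nmodType) (m n : nat) (F : nat -> V) : (m <= n)%N ->
  (forall k, (m <= k < n)%N -> F k = 0) -> \sum_(k < n) F k = \sum_(k < m) F k.
Proof.
move=> mn F0; rewrite (big_ord_widen _ F mn) [RHS]big_mkcond; apply: eq_bigr => k _.
by case: ltnP => // mk; rewrite F0 // mk ltn_ord.
Qed.

Lemma norm_sum_supported (R : numDomainType) (f : nat -> R) (X : R) (c d : nat) :
  0 <= X -> (forall k, (c <= k <= d)%N -> `|f k| <= X) ->
  (forall k, (k < c)%N || (d < k)%N -> f k = 0) ->
  forall N, `|\sum_(k < N) f k| <= (minn N d.+1 - c)%:R * X.
Proof.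
move=> X_ge0 fX f0; elim=> [|N IHN]; first by rewrite big_ord0 normr0 mulr_ge0.
rewrite big_ord_recr /=; apply: le_trans (ler_normD _ _) _.
have [/andP[cN Nd]|Nout] := boolP (c <= N <= d)%N.
  have -> : (minn N.+1 d.+1 - c = (minn N d.+1 - c).+1)%N by lia.
  by rewrite -addn1 natrD mulrDl mul1r lerD // fX ?cN.
rewrite f0 ?normr0 ?addr0; last by move: Nout; rewrite negb_and -!ltnNge.
by apply: le_trans IHN _; rewrite ler_wpM2r // ler_nat; lia.
Qed.

Section hessenberg_powers.
Context (R : pzRingType) (J : nat -> nat -> R).
Hypothesis J_hessenberg : forall l k, (l.+1 < k)%N -> J l k = 0.

(* Entry (a, b) of the l-th power of the matrix J with row a cut off at
   column c a: c = fun _ => n gives the truncation J_n = (J a b)_{a, b < n},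
   c = fun a => a.+2 the whole Hessenberg matrix J. *)
Fixpoint Jpow (c : nat -> nat) (l a b : nat) : R :=
  if l is l'.+1 then \sum_(k < c a) J a k * Jpow c l' k b else (a == b)%:R.

Lemma Jpow_eq0 c l a b : (a + l < b)%N -> Jpow c l a b = 0.
Proof.
elim: l a => [|l IHl] a /=; first by rewrite addn0 => /ltn_eqF ->.
move=> alb; apply: big1 => k _; have [ka|ak] := leqP k a.+1.
  by rewrite IHl ?mulr0 //; lia.
by rewrite J_hessenberg ?mul0r.
Qed.

Lemma Jpow_trunc n l a b : (a + l < n)%N ->
  Jpow (fun _ => n) l a b = Jpow (fun a => a.+2) l a b.
Proof.
elim: l a => [|l IHl] a //= aln.
rewrite (@sum_ord_narrow0 _ a.+2 n (fun k => J a k * Jpow _ l k b)); last 2 first.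
- by lia.
- by move=> k /andP[ak _]; rewrite J_hessenberg ?mul0r.
by apply: eq_bigr => k _; rewrite IHl //; have := ltn_ord k; lia.
Qed.

Definition Jtrace_defect n l :=
  \sum_(a < n) (Jpow (fun _ => n) l a a - Jpow (fun a => a.+2) l a a).

End hessenberg_powers.

Section hessenberg_powers_bounded.
Context (R : realDomainType) (J : nat -> nat -> R).
Hypothesis J_hessenberg : forall l k, (l.+1 < k)%N -> J l k = 0.
Hypothesis J_band_bounded : forall Rad : nat, exists M : R, forall a b : nat,
  (a <= b + Rad)%N -> (b <= a + Rad)%N -> `|J a b| <= M.

Lemma Jpow_bounded l D :
  exists B, forall c a b, (a <= b + D)%N -> `|Jpow J c l a b| <= B.
Proof.
elim: l D => [|l IHl] D.
  by exists 1 => c a b _ /=; case: (a == b); rewrite ?normr1 ?normr0.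
have [B JpowB] := IHl D.+1; have [M JM] := J_band_bounded (D + l).+1.
have B_ge0 : 0 <= B by apply: le_trans (JpowB (fun _ => 0%N) 0%N 0%N _).
have M_ge0 : 0 <= M by apply: le_trans (JM 0%N 0%N _ _).
exists ((D + l).+2%:R * (M * B)) => c a b abD /=.
(* only the columns b - l <= k <= a + 1 contribute *)
apply: le_trans (@norm_sum_supported _ (fun k => J a k * Jpow J c l k b) (M * B)
  (b - l) a.+1 _ _ _ _) _.
- exact: mulr_ge0.
- move=> k /andP[lk ka]; rewrite normrM ler_pM //.
    by apply: JM; lia.
  by apply: JpowB; lia.
- move=> k /orP[kl|ak]; last by rewrite J_hessenberg ?mul0r.
  by rewrite Jpow_eq0 ?mulr0 //; lia.
- by rewrite ler_wpM2r ?mulr_ge0 // ler_nat; lia.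
Qed.

Lemma Jtrace_defect_bounded l : exists C, forall n, `|Jtrace_defect J n l| <= C.
Proof.
have [B JpowB] := Jpow_bounded l 0.
have B_ge0 : 0 <= B by apply: le_trans (JpowB (fun _ => 0%N) 0%N 0%N _).
exists (l.+1%:R * (B + B)) => n; rewrite /Jtrace_defect.
pose f a := if (a < n)%N
  then Jpow J (fun _ => n) l a a - Jpow J (fun a => a.+2) l a a else 0.
rewrite (eq_bigr (f \o val)) => [|a _]; last by rewrite /= /f ltn_ord.
(* the truncation only affects the last l diagonal entries *)
apply: le_trans (@norm_sum_supported _ f (B + B) (n - l) n.-1 _ _ _ _) _.
- exact: addr_ge0.
- move=> a _; rewrite /f; case: ifP => _; last by rewrite normr0 addr_ge0.
  by apply: le_trans (ler_normB _ _) _; rewrite lerD ?JpowB ?addn0.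
- move=> a /orP[anl|an]; rewrite /f; case: ifP => // a_lt_n.
    by rewrite Jpow_trunc ?subrr //; lia.
  by lia.
- by rewrite ler_wpM2r ?addr_ge0 // ler_nat; lia.
Qed.

End hessenberg_powers_bounded.

Lemma mi_size_path_mi r (i : nat -> 'I_r) l : mi_size (path_mi i l) = l.
Proof.
rewrite /mi_size /path_mi exchange_big /= (eq_bigr (fun _ => 1%N)).
  by rewrite sum1_card card_ord.
by move=> k _; rewrite (bigD1 (i k)) //= eqxx big1 // => t /negbTE; rewrite eq_sym => ->.
Qed.

Lemma path_mi_mono r (i : nat -> 'I_r) t : {homo path_mi i ^~ t : j k / (j <= k)%N}.
Proof.
move=> j k jk; rewrite /path_mi -!(big_mkord xpredT (fun l => nat_of_bool (i l == t))).
by rewrite (big_cat_nat (leq0n j) jk) /= leq_addr.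
Qed.

Lemma sum_ord_dirac (V : nmodType) N a (F : nat -> V) : (a < N)%N ->
  \sum_(b < N) F b *+ (b == a :> nat) = F a.
Proof.
move=> aN; rewrite (bigD1 (Ordinal aN)) //= eqxx mulr1n big1 ?addr0 // => b.
by rewrite -val_eqE /= => /negbTE ->.
Qed.

Section multiple_orthogonal_path.
Context (R : realType) (r : nat) (mu : 'I_r -> {measure set R -> \bar R})
  (mu_moments : forall t, finite_moments (mu t))
  (P : ('I_r -> nat) -> {poly R}) (P_typeII : forall n, typeII mu n (P n))
  (A : ('I_r -> nat) -> 'I_r -> {poly R}) (A_typeI : forall n, typeI mu n (A n))
  (i : nat -> 'I_r).

Local Notation p := (pseq P i).
Local Notation L t := (poly_integral (mu t)).
Local Notation a j := (A (path_mi i j.+1)).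

Lemma size_pseq l : size (p l) = l.+1.
Proof. by have [_ [-> _]] := P_typeII (path_mi i l); rewrite mi_size_path_mi. Qed.

Lemma monic_pseq l : p l \is monic.
Proof. by have [] := P_typeII (path_mi i l). Qed.

Lemma poly_integral_mul_pseq b t (q : {poly R}) : (size q <= path_mi i b t)%N ->
  L t (q * p b) = 0.
Proof.
move=> qb; rewrite poly_integral_mull // big1 // => s _; rewrite poly_integral_XnM.
have [_ [_ ->]] := P_typeII (path_mi i b); first by rewrite mulr0.
exact: leq_trans (ltn_ord s) qb.
Qed.

Lemma sum_poly_integral_typeI j (q : {poly R}) : (size q <= j.+1)%N ->
  \sum_(t < r) L t (q * a j t) = q`_j.
Proof.
move=> qj; have [_ a_mom] := A_typeI (path_mi i j.+1).
rewrite mi_size_path_mi in a_mom.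
have aX s : (s <= j)%N -> \sum_(t < r) L t ('X^s * a j t) = (s == j)%:R.
  under eq_bigr do rewrite poly_integral_XnM.
  rewrite leq_eqVlt => /predU1P[->|sj]; first by rewrite eqxx (proj2 (a_mom j)).
  by rewrite (ltn_eqF sj) (proj1 (a_mom s)).
under eq_bigr do rewrite poly_integral_mull //.
rewrite exchange_big /=; under eq_bigr do rewrite -mulr_sumr.
rewrite -(@sum_ord_narrow0 _ _ j.+1
  (fun s => q`_s * \sum_(t < r) L t ('X^s * a j t))) //; last first.
  by move=> s /andP[qs _]; rewrite nth_default ?mul0r.
rewrite big_ord_recr /= aX // eqxx mulr1 big1 ?add0r // => s _.
by rewrite aX ?(ltn_eqF (ltn_ord s)) ?mulr0 // ltnW.
Qed.

Lemma biorthogonality b j : \sum_(t < r) L t (p b * a j t) = (b == j)%:R.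
Proof.
have [jb|bj] := ltnP j b.
  rewrite (gtn_eqF jb) big1 // => t _; rewrite mulrC poly_integral_mul_pseq //.
  have [a_size _] := A_typeI (path_mi i j.+1).
  exact: leq_trans (a_size t) (path_mi_mono _ _ jb).
rewrite sum_poly_integral_typeI ?size_pseq //.
have [<-|bj'] := eqVneq b j.
  by have /monicP := monic_pseq b; rewrite lead_coefE size_pseq.
by rewrite nth_default // size_pseq ltn_neqAle bj' bj.
Qed.

Variable J : nat -> nat -> R.
Hypothesis pseq_recurrence :
  forall l, 'X * p l = \sum_(k < l.+2) J l k *: p k.

Lemma Xn_mul_pseq l j N : (j + l < N)%N ->
  'X^l * p j = \sum_(b < N) Jpow J (fun a => a.+2) l j b *: p b.
Proof.
elim: l j => [|l IHl] j jlN /=.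
  rewrite expr0 mul1r; under eq_bigr do rewrite scaler_nat eq_sym.
  by rewrite sum_ord_dirac //; lia.
rewrite exprSr -mulrA pseq_recurrence mulr_sumr.
have XnJ (k : 'I_j.+2) : 'X^l * (J j k *: p k) =
    \sum_(b < N) (J j k * Jpow J (fun a => a.+2) l k b) *: p b.
  rewrite -scalerAr (IHl k); last by have := ltn_ord k; lia.
  by rewrite scaler_sumr; under eq_bigr do rewrite scalerA.
rewrite (eq_bigr _ (fun k _ => XnJ k)).
by rewrite exchange_big; under eq_bigr do rewrite -scaler_suml.
Qed.

Lemma sum_poly_integral_Xn_pseq l j :
  \sum_(t < r) L t ('X^l * p j * a j t) = Jpow J (fun a => a.+2) l j j.
Proof.
pose c b := Jpow J (fun a => a.+2) l j b.
have expand t : L t ((\sum_(b < (j + l).+1) c b *: p b) * a j t) =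
    \sum_(b < (j + l).+1) c b * L t (p b * a j t).
  rewrite mulr_suml -poly_integral_sum //; congr poly_integral.
  by apply: eq_bigr => b _; rewrite scalerAl.
rewrite (@Xn_mul_pseq l j (j + l).+1) // (eq_bigr _ (fun t _ => expand t)).
rewrite exchange_big /=; under eq_bigr do rewrite -mulr_sumr biorthogonality mulr_natr.
by rewrite sum_ord_dirac //; lia.
Qed.

Variables (m : {measure set R -> \bar R}) (w : 'I_r -> R -> R).
Hypothesis mu_density : forall t, is_density (mu t) m (w t).

Lemma integrable_poly_density t (q : {poly R}) :
  m.-integrable setT (EFin \o (fun x => q.[x] * w t x)).
Proof.
by apply: integrable_density; [exact: mu_density|exact: measurable_horner|
  exact: integrable_horner].
Qed.

Lemma Rintegral_poly_density t (q : {poly R}) :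
  Rintegral m setT (fun x => q.[x] * w t x) = L t q.
Proof. by rewrite (Rintegral_density (mu_density t) (measurable_horner q)). Qed.

Lemma eta_poly_integral_kernel f n : eta_poly_integral P A w m i n f =
  n%:R^-1 * \sum_(j < n) \sum_(t < r) L t (f * p j * a j t).
Proof.
rewrite /eta_poly_integral; congr (_ * _).
transitivity (Rintegral m setT
    (fun x => \sum_(j < n) \sum_(t < r) (f * p j * a j t).[x] * w t x)).
  congr Rintegral; apply/funext => x; rewrite /CDkernel mulr_sumr.
  apply: eq_bigr => j _; rewrite /qseq /Qfun !mulr_sumr.
  by apply: eq_bigr => t _; rewrite !hornerM !mulrA.
rewrite Rintegral_sum => [|j]; last first.
  by apply: integrable_Rsum => t; exact: integrable_poly_density.
apply: eq_bigr => j _; rewrite Rintegral_sum => [|t]; last exact: integrable_poly_density.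
by apply: eq_bigr => t _; rewrite Rintegral_poly_density.
Qed.

Lemma eta_poly_integral_Jpow f n : eta_poly_integral P A w m i n f =
  n%:R^-1 * \sum_(l < size f) f`_l * \sum_(j < n) Jpow J (fun a => a.+2) l j j.
Proof.
have diagE j : \sum_(t < r) L t (f * p j * a j t) =
    \sum_(l < size f) f`_l * Jpow J (fun a => a.+2) l j j.
  under eq_bigr do rewrite -mulrA poly_integral_mull //.
  rewrite exchange_big; apply: eq_bigr => l _.
  rewrite -mulr_sumr -sum_poly_integral_Xn_pseq; congr (_ * _).
  by apply: eq_bigr => t _; rewrite mulrA.
rewrite eta_poly_integral_kernel; under eq_bigr do rewrite diagE.
by rewrite exchange_big; under eq_bigr do rewrite -mulr_sumr.
Qed.

End multiple_orthogonal_path.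

Section triangular_powers.
Context (R : pzSemiRingType) (n : nat).
Implicit Types A B : 'M[R]_n.

Lemma is_trig_mxM A B : is_trig_mx A -> is_trig_mx B -> is_trig_mx (A *m B).
Proof.
move=> /is_trig_mxP A0 /is_trig_mxP B0; apply/is_trig_mxP => a b ab.
rewrite mxE big1 // => k _; have [ak|ka] := ltnP a k; first by rewrite A0 ?mul0r.
by rewrite B0 ?mulr0 //; exact: leq_ltn_trans ab.
Qed.

Lemma trig_mxM_diag A B k : is_trig_mx A -> is_trig_mx B ->
  (A *m B) k k = A k k * B k k.
Proof.
move=> /is_trig_mxP A0 /is_trig_mxP B0; rewrite mxE (bigD1 k) //= big1 ?addr0 // => a.
rewrite -val_eqE => ak; have [ka|] := ltnP k a; first by rewrite A0 ?mul0r.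
by rewrite leq_eqVlt (negbTE ak) /= => /B0 ->; rewrite mulr0.
Qed.

Lemma is_trig_mxX A l : is_trig_mx A -> is_trig_mx (A ^+ l).
Proof.
move=> A_trig; elim: l => [|l IHl]; first exact: scalar_mx_is_trig.
by rewrite exprS -mulmxE is_trig_mxM.
Qed.

Lemma trig_mxX_diag A l k : is_trig_mx A -> (A ^+ l) k k = A k k ^+ l.
Proof.
move=> A_trig; elim: l => [|l IHl]; first by rewrite !expr0 mxE eqxx.
by rewrite !exprS -mulmxE trig_mxM_diag ?is_trig_mxX // IHl.
Qed.

End triangular_powers.

Lemma map_mxX (R S : pzRingType) (f : {rmorphism R -> S}) n (A : 'M[R]_n) l :
  map_mx f (A ^+ l) = map_mx f A ^+ l.
Proof.
elim: l => [|l IHl]; first by rewrite !expr0 map_mx1.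
by rewrite !exprS -!mulmxE map_mxM IHl.
Qed.

Section similarity.
Context (F : fieldType) (n : nat) (Q : 'M[F]_n).
Hypothesis Q_unit : Q \in unitmx.

Lemma conjmxX (A : 'M[F]_n) l : (Q *m A *m invmx Q) ^+ l = Q *m A ^+ l *m invmx Q.
Proof.
elim: l => [|l IHl]; first by rewrite !expr0 -[1 in RHS]/(1%:M) mulmx1 mulmxV.
by rewrite exprS IHl -!mulmxE !mulmxA mulmxKV // exprS -mulmxE !mulmxA.
Qed.

Lemma char_poly_conj (A : 'M[F]_n) : char_poly (Q *m A *m invmx Q) = char_poly A.
Proof.
rewrite /char_poly; set Qp := map_mx polyC Q; set Qp' := map_mx polyC (invmx Q).
have QQ' : Qp *m Qp' = 1%:M by rewrite -map_mxM mulmxV // map_mx1.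
have Q'Q : Qp' *m Qp = 1%:M by rewrite -map_mxM mulVmx // map_mx1.
have -> : char_poly_mx (Q *m A *m invmx Q) = Qp *m char_poly_mx A *m Qp'.
  rewrite /char_poly_mx mulmxBr mulmxBl !map_mxM -/Qp -/Qp'.
  by congr (_ - _); rewrite mul_mx_scalar -scalemxAl QQ' scalemx1.
by rewrite !det_mulmx mulrC mulrA -det_mulmx Q'Q det1 mul1r.
Qed.

End similarity.

Lemma sum_pow_roots_char_poly (C : numClosedFieldType) n (A : 'M[C]_n) (s : seq C) l :
  char_poly A = \prod_(z <- s) ('X - z%:P) -> \sum_(z <- s) z ^+ l = \tr (A ^+ l).
Proof.
move=> charA; have commA : {in [:: A] &, forall B D, comm_mx B D}.
  by move=> ? ? /[!inE] /eqP-> /eqP->.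
have [Q Q_unitary /allP Q_trig] := cotrigonalization commA.
have Q_unit := unitarymx_unit Q_unitary.
have := Q_trig A (mem_head _ _); rewrite /= /similar_to conjumx //.
set T := Q *m A *m invmx Q => T_trig.
have /prod_XsubC_eq s_perm : \prod_(z <- s) ('X - z%:P) =
    \prod_(z <- [seq T k k | k <- index_enum 'I_n]) ('X - z%:P).
  by rewrite big_map -charA -(char_poly_conj Q_unit) char_poly_trig.
rewrite (perm_big _ s_perm) big_map; transitivity (\tr (T ^+ l)).
  by rewrite /mxtrace; apply: eq_bigr => k _; rewrite trig_mxX_diag.
by rewrite conjmxX // mxtrace_mulC mulmxA mulVmx // mul1mx.
Qed.

Section hessenberg_char_poly.
Context (R : idomainType) (p : nat -> {poly R}) (J : nat -> nat -> R).
Hypothesis p_recurrence : forall l, 'X * p l = \sum_(k < l.+2) J l k *: p k.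
Hypothesis J_hessenberg : forall l k, (l.+1 < k)%N -> J l k = 0.
Hypothesis p_monic : forall l, p l \is monic.
Hypothesis size_p : forall l, size (p l) = l.+1.

Definition Jmx n : 'M[R]_n := \matrix_(a, b) J a b.

Lemma Jmx_pow_entry n l (a b : 'I_n) : (Jmx n ^+ l) a b = Jpow J (fun _ => n) l a b.
Proof.
elim: l a b => [|l IHl] a b; first by rewrite expr0 mxE.
by rewrite exprS -mulmxE mxE; apply: eq_bigr => k _; rewrite IHl mxE.
Qed.

Lemma p0_eq1 : p 0 = 1.
Proof.
have /size_poly1P[c _ p0E] : size (p 0) == 1%N by rewrite size_p.
by have /monicP := p_monic 0; rewrite p0E lead_coefC => c1; rewrite c1.
Qed.

Lemma p_recurrence_trunc a N : (a < N)%N ->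
  'X * p a - \sum_(b < N) J a b *: p b = (J a N *: p N) *+ (a.+1 == N).
Proof.
move=> aN; rewrite p_recurrence; have [<-|aN'] := eqVneq a.+1 N.
  by rewrite big_ord_recr /= addrC addrK ?eqxx.
rewrite (@sum_ord_narrow0 _ a.+2 N (fun k => J a k *: p k)) ?subrr //; first by lia.
by move=> k /andP[ak _]; rewrite J_hessenberg ?scale0r.
Qed.

Lemma char_poly_mx_Jmx_col n :
  char_poly_mx (Jmx n.+1) *m \col_(a < n.+1) p a =
    p n.+1 *: \col_(a < n.+1) ((J n n.+1)%:P *+ (a == n :> nat)).
Proof.
apply/matrixP => a z; rewrite !mxE.
under eq_bigr do rewrite !mxE mulrBl mulrnAl mul_polyC.
rewrite sumrB (bigD1 a) //= eqxx mulr1n big1 ?addr0 => [|b]; last first.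
  by rewrite eq_sym => /negbTE ->.
rewrite p_recurrence_trunc // eqSS; case: eqP => [an|_]; last by rewrite mulr0.
by rewrite an mulrC mul_polyC.
Qed.

Lemma char_poly_Jmx n : char_poly (Jmx n) = p n.
Proof.
case: n => [|n]; first by rewrite p0_eq1 /char_poly det_mx00.
set X := char_poly_mx (Jmx n.+1).
have adjE : (\det X)%:M *m \col_(a < n.+1) p a =
    p n.+1 *: (\adj X *m \col_(a < n.+1) ((J n n.+1)%:P *+ (a == n :> nat))).
  by rewrite -mul_adj_mx -mulmxA char_poly_mx_Jmx_col scalemxAr.
have := congr1 (fun M : 'cV_n.+1 => M ord0 ord0) adjE.
rewrite mul_scalar_mx !mxE p0_eq1 mulr1 => detE.
have p_dvd : p n.+1 %| char_poly (Jmx n.+1) by rewrite /char_poly -/X detE dvdp_mulIl.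
apply/eqP; rewrite eq_sym -eqp_monic ?char_poly_monic //.
by rewrite -dvdp_size_eqp // size_char_poly size_p.
Qed.

End hessenberg_char_poly.

Lemma map_poly_zerosE (R : realType) (q : {poly R}) : q \is monic ->
  map_poly (real_complex R) q = \prod_(z <- zeros q) ('X - z%:P).
Proof.
move=> q_monic; rewrite /zeros; case: closed_field_poly_normal => s /= {1}->.
have /monicP -> : map_poly (real_complex R) q \is monic by rewrite map_monic.
by rewrite scale1r.
Qed.

Lemma sum_zeros_pow_char_poly (R : realType) n (A : 'M[R]_n) l :
  \sum_(y <- zeros (char_poly A)) y ^+ l = real_complex R (\tr (A ^+ l)).
Proof.
rewrite (@sum_pow_roots_char_poly _ _ (map_mx (real_complex R) A)).
  by rewrite -map_mxX trace_map_mx.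
by rewrite -map_char_poly map_poly_zerosE // char_poly_monic.
Qed.

Lemma normc_real_complex (R : realType) (x : R) : Normc.normc (x%:C)%C = `|x|.
Proof. by rewrite /Normc.normc /= expr0n addr0 sqrtr_sqr. Qed.

Lemma bounded_sum (R : numDomainType) (u : nat -> nat -> R) N :
  (forall l, exists C, forall n, `|u l n| <= C) ->
  exists C, forall n, `|\sum_(l < N) u l n| <= C.
Proof.
move=> u_bounded; elim: N => [|N [C sumC]].
  by exists 0 => n; rewrite big_ord0 normr0.
have [C' uC'] := u_bounded N; exists (C + C') => n; rewrite big_ord_recr /=.
by apply: le_trans (ler_normD _ _) _; exact: lerD.
Qed.

Lemma cvg_bounded_divn (R : realType) (u : nat -> R) :
  (exists C, forall n, `|u n| <= C) -> `|n%:R^-1 * u n| @[n --> \oo] --> 0.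
Proof.
case=> C uC; rewrite -cvg_shiftS /=.
apply: (@squeeze_cvgr _ _ _ _ (fun _ => 0) (fun n => C * harmonic n)).
- near=> n; rewrite normr_ge0 normrM ger0_norm ?invr_ge0 // mulrC /=.
  by rewrite ler_wpM2r ?invr_ge0.
- exact: cvg_cst.
- by rewrite -(mulr0 C); apply: cvgMr; exact: cvg_harmonic.
Unshelve. all: by end_near.
Qed.

Section nu_minus_eta.
Context (R : realType) (r : nat) (mu : 'I_r -> {measure set R -> \bar R})
  (mu_moments : forall t, finite_moments (mu t))
  (P : ('I_r -> nat) -> {poly R}) (P_typeII : forall n, typeII mu n (P n))
  (A : ('I_r -> nat) -> 'I_r -> {poly R}) (A_typeI : forall n, typeI mu n (A n))
  (m : {measure set R -> \bar R}) (w : 'I_r -> R -> R)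
  (mu_density : forall t, is_density (mu t) m (w t))
  (i : nat -> 'I_r) (J : nat -> nat -> R)
  (pseq_recurrence : forall l, 'X * pseq P i l = \sum_(k < l.+2) J l k *: pseq P i k)
  (J_hessenberg : forall l k, (l.+1 < k)%N -> J l k = 0).

Local Notation phi := (real_complex R).

Lemma nu_poly_integral_Jpow f n : nu_poly_integral (pseq P i n) n f =
  phi (n%:R^-1 * \sum_(l < size f) f`_l * \sum_(a < n) Jpow J (fun _ => n) l a a).
Proof.
have traceE l : \sum_(y <- zeros (pseq P i n)) y ^+ l =
    phi (\sum_(a < n) Jpow J (fun _ => n) l a a).
  rewrite -(char_poly_Jmx pseq_recurrence J_hessenberg (monic_pseq P_typeII i)
    (size_pseq P_typeII i)) sum_zeros_pow_char_poly.
  by congr phi; apply: eq_bigr => a _; rewrite Jmx_pow_entry.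
have hornerE y : (map_poly phi f).[y] = \sum_(l < size f) phi f`_l * y ^+ l.
  by rewrite horner_coef size_map_poly; apply: eq_bigr => l _; rewrite coef_map.
rewrite /nu_poly_integral rmorphM /= fmorphV rmorph_nat; congr (_ * _).
under eq_bigr do rewrite hornerE.
rewrite exchange_big rmorph_sum; apply: eq_bigr => l _.
by rewrite -mulr_sumr traceE rmorphM.
Qed.

Lemma nu_sub_eta_poly_integral f n :
  nu_poly_integral (pseq P i n) n f - (eta_poly_integral P A w m i n f)%:C%C =
  phi (n%:R^-1 * \sum_(l < size f) f`_l * Jtrace_defect J n l).
Proof.
rewrite nu_poly_integral_Jpow (eta_poly_integral_Jpow mu_moments P_typeII A_typeI
  pseq_recurrence mu_density) -rmorphB -mulrBr -sumrB.
by congr (phi (_ * _)); apply: eq_bigr => l _; rewrite -mulrBr /Jtrace_defect sumrB.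
Qed.

Hypothesis J_band_bounded : forall Rad : nat, exists M : R, forall a b : nat,
  (a <= b + Rad)%N -> (b <= a + Rad)%N -> `|J a b| <= M.

Lemma cvg_nu_sub_eta_poly_integral f :
  (fun n => Normc.normc (nu_poly_integral (pseq P i n) n f
    - (eta_poly_integral P A w m i n f)%:C%C)) @ \oo --> (0 : R).
Proof.
rewrite (_ : (fun n => _) =
    fun n => `|n%:R^-1 * \sum_(l < size f) f`_l * Jtrace_defect J n l|).
  apply: cvg_bounded_divn.
  apply: (@bounded_sum _ (fun l n => f`_l * Jtrace_defect J n l)) => l.
  have [C defectC] := Jtrace_defect_bounded J_hessenberg J_band_bounded l.
  by exists (`|f`_l| * C) => n; rewrite normrM ler_wpM2l.
by apply/funext => n; rewrite nu_sub_eta_poly_integral normc_real_complex.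
Qed.

End nu_minus_eta.

Theorem theorem4 (R : realType) (r : nat) (hr : (0 < r)%N)
    (mu : 'I_r -> {measure set R -> \bar R})
    (hmom : forall j, finite_moments (mu j))
    (hperf : perfect mu)
    (P : ('I_r -> nat) -> {poly R}) (hP : forall n, typeII mu n (P n))
    (A : ('I_r -> nat) -> 'I_r -> {poly R}) (hA : forall n, typeI mu n (A n))
    (m : {measure set R -> \bar R}) (w : 'I_r -> R -> R)
    (hw : forall j, is_density (mu j) m (w j))
    (i : nat -> 'I_r)
    (J : nat -> nat -> R)
    (hJ : forall l, 'X * pseq P i l = \sum_(k < l.+2) J l k *: pseq P i k)
    (hJ0 : forall l k, (l.+1 < k)%N -> J l k = 0)
    (hbd : forall Rad : nat, exists M : R, forall a b : nat,
        (a <= b + Rad)%N -> (b <= a + Rad)%N -> `|J a b| <= M) :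
  (forall l : nat,
     (fun n : nat => Normc.normc (nu_poly_integral (pseq P i n) n 'X^l
                          - (eta_poly_integral P A w m i n 'X^l)%:C%C))
       @ \oo --> (0 : R)) /\
  (forall f : {poly R},
     (fun n : nat => Normc.normc (nu_poly_integral (pseq P i n) n f
                          - (eta_poly_integral P A w m i n f)%:C%C))
       @ \oo --> (0 : R)).
Proof.
have cvg_f := cvg_nu_sub_eta_poly_integral hmom hP hA hw hJ hJ0 hbd.
by split=> [l|f]; exact: cvg_f.
Qed.
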